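(* Let $n$ and $\delta$ be positive integers with $n/2 < \delta \le 2n/3$, and write $\delta = (1-\beta)n$ (so $1/3\le\beta<1/2$ and $p=2$). Then $$k_3(n,\delta) \ge g_3(\beta)\,n^3 = \tfrac12(1-2\beta)(1-\beta)\beta\, n^3 .$$ Moreover, equality $k_3(n,\delta)=g_3(\beta)n^3$ holds if and only if $(n,\beta)$ is feasible, and in that case a graph $G$ of order $n$ with minimum degree $\delta$ has exactly $g_3(\beta)n^3$ triangles if and only if $G\in\mathcal{G}(n,\beta)$.
   Context: All graphs are finite and simple. For a graph $G$, $k_r(G)$ denotes the number of $r$-cliques (complete subgraphs on $r$ vertices) of $G$. For positive integers $n,\delta$, $k_r(n,\delta)$ is the minimum of $k_r(G)$ over all graphs $G$ of order $n$ with minimum degree $\delta$. Throughout, $\delta=(1-\beta)n$ with $0<\beta<1$ (so $\beta n$ is an integer), and $p=\lceil \beta^{-1}\rceil-1$, so $1/(p+1)\le \beta<1/p$. For such $\beta$ and integers $r$, define $$g_r(\beta)=\binom{p-1}{r}\beta^{r}+\binom{p-1}{r-1}(1-(p-1)\beta)\beta^{r-1}+\frac12\binom{p-1}{r-2}(1-p\beta)(1-(p-1)\beta)\beta^{r-2},$$ where $p=\lceil\beta^{-1}\rceil-1$ and $\binom{x}{y}=0$ if $x<y$ or $y<0$. The family $\mathcal{G}(n,\beta)$ (defined only when $n$ and $(1-\beta)n$ are positive integers not both odd, $0<\beta<1$) consists of all graphs $G$ on vertex set $V$ with $|V|=n$ for which there is a partition $V=V_0\cup V_1\cup\dots\cup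 V_{p-1}$ with $|V_0|=(1-(p-1)\beta)n$ and $|V_i|=\beta n$ for $1\le i\le p-1$, such that: for $0\le i<j\le p-1$ every vertex of $V_i$ is adjacent to every vertex of $V_j$; for $1\le i\le p-1$, $V_i$ is an independent set; and $G[V_0]$ is a $(1-p\beta)n$-regular graph whose number of triangles is minimum among all $(1-p\beta)n$-regular graphs on $|V_0|$ vertices. The pair $(n,\beta)$ is called feasible if $\mathcal{G}(n,\beta)$ is defined and $G[V_0]$ is triangle-free for $G\in\mathcal{G}(n,\beta)$ (equivalently, some $(1-p\beta)n$-regular triangle-free graph on $(1-(p-1)\beta)n$ vertices exists). *)

From HB Require Import structures.
From mathcomp Require Import all_boot all_order all_algebra.
Set Implicit Arguments. Unset Strict Implicit. Unset Printing Implicit Defensive.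
Import Order.TTheory GRing.Theory Num.Theory.

Definition simple_graph (V : finType) (e : rel V) : Prop :=
  (forall x y, e x y = e y x) /\ (forall x, ~~ e x x).

Definition deg (V : finType) (e : rel V) (x : V) : nat := #|[set y | e x y]|.

Definition has_mindeg (V : finType) (e : rel V) (d : nat) : Prop :=
  (exists x, deg e x = d) /\ (forall x, d <= deg e x).

Definition is_clique (V : finType) (e : rel V) (r : nat) (A : {set V}) : bool :=
  (#|A| == r) && [forall x in A, forall y in A, (x != y) ==> e x y].

Definition kr (V : finType) (e : rel V) (r : nat) : nat :=
  #|[set A : {set V} | is_clique e r A]|.

Definition kr_in (V : finType) (e : rel V) (S : {set V}) (r : nat) : nat :=
  #|[set A : {set V} | (A \subset S) && is_clique e r A]|.

Definition regular (V : finType) (e : rel V) (d : nat) : Prop :=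
  forall x, deg e x = d.

Definition rel_of (n : nat) (E : {set 'I_n * 'I_n}) : rel 'I_n :=
  fun x y => (x, y) \in E.

Definition simpleb (n : nat) (E : {set 'I_n * 'I_n}) : bool :=
  [forall x, forall y, ((x, y) \in E) == ((y, x) \in E)] && [forall x, (x, x) \notin E].

Definition mindegb (n : nat) (E : {set 'I_n * 'I_n}) (d : nat) : bool :=
  [exists x, deg (rel_of E) x == d] && [forall x, d <= deg (rel_of E) x].

(* The default value n ^ r (>= C(n,r), an upper
   bound for any k_r(G)) is only returned when no such graph exists. *)
Definition kr_min (r n d : nat) : nat :=
  \big[minn/n ^ r]_(E : {set 'I_n * 'I_n} | simpleb E && mindegb E d) kr (rel_of E) r.

(* Parametrisation: b = beta * n (an integer), with 0 < b < n.
   p = ceil(n / b) - 1 = ceil(1/beta) - 1. *)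
Definition pp (n b : nat) : nat := (n + b - 1) %/ b - 1.

(* g_r(beta) * n^r, written in terms of n and b = beta n (homogeneous of degree r). *)
Definition bin (x y : int) : nat :=
  match x, y with Posz x', Posz y' => 'C(x', y') | _, _ => 0%N end.

Local Open Scope ring_scope.
Definition gr_n (r n b : nat) : rat :=
  let p := pp n b in
  let B := (b%:R : rat) in
  (bin (p%:Z - 1) r%:Z)%:R * B ^+ r
  + (bin (p%:Z - 1) (r%:Z - 1))%:R * (n%:R - (p%:R - 1) * B) * B ^+ r.-1
  + (bin (p%:Z - 1) (r%:Z - 2))%:R / 2%:R
      * (n%:R - p%:R * B) * (n%:R - (p%:R - 1) * B) * B ^+ r.-2.

Local Close Scope ring_scope.

(* Membership of G (on vertex type V, |V| = n) in the family G(n, beta), b = beta n.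
   part x = i means x \in V_i (i = 0 .. p-1). *)
Definition in_family (n b : nat) (V : finType) (e : rel V) : Prop :=
  let p := pp n b in
  exists part : V -> 'I_p,
    let Vi := fun i : nat => [set x | val (part x) == i] in
    [/\ #|Vi 0%N| = n - (p - 1) * b,
        (forall i, (0 < i < p)%N -> #|Vi i| = b),
        (forall x y, part x != part y -> e x y),
        (forall x y, part x = part y -> val (part x) != 0%N -> ~~ e x y) &
        (forall x, x \in Vi 0%N -> #|[set y in Vi 0%N | e x y]| = n - p * b) /\
        (forall f : rel 'I_(n - (p - 1) * b), simple_graph f -> regular f (n - p * b) ->
           kr_in e (Vi 0%N) 3 <= kr f 3)].

(* (n, beta) feasible: G(n,beta) defined (n and (1-beta)n not both odd) and
   some (1 - p beta) n - regular triangle-free graph on (1-(p-1)beta) n vertices exists. *)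
Definition feasible (n b : nat) : Prop :=
  let p := pp n b in
  ~~ (odd n && odd (n - b)) /\
  exists f : rel 'I_(n - (p - 1) * b),
    [/\ simple_graph f, regular f (n - p * b) & kr f 3 = 0].

(* Write b = n - d and s = d - b, so that 0 < s <= b and n = 2b + s.  Any two vertices
   have at least s common neighbours; let c'(xy) be their number truncated at b.
   Inclusion-exclusion on three neighbourhoods gives c'(xy) + c'(yz) + c'(xz) >= 2s + b for
   every triple, and s <= c gives c * min(c, b) + s b <= (s + b) c for every edge.  Summing
   the first inequality over triangles, the second over edges, and using 2|E| >= n d yields
   6 k_3 >= 3 s b d, i.e. k_3 >= b d s / 2 = g_3(beta) n^3.
   In the equality case all degrees are d, every edge has codegree s or b, and no triangle
   has a common neighbour.  The common neighbourhood of an edge of codegree b is then an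
   independent set of size b joined to every other vertex, and the remaining b + s vertices
   span an s-regular triangle-free graph.  Conversely every such join attains the bound;
   the parity condition in feasibility is the handshake lemma for this d-regular graph. *)

From HB Require Import structures.
From mathcomp Require Import all_boot all_order all_algebra zify ring.
Set Implicit Arguments. Unset Strict Implicit. Unset Printing Implicit Defensive.

Lemma sum_nat_mem (T : finType) (A : {set T}) : \sum_x (x \in A : nat) = #|A|.
Proof. by rewrite -sum1_card [RHS]big_mkcond; apply: eq_bigr => x _; case: (x \in A). Qed.

Lemma eq_sum_leq (I : finType) (F G : I -> nat) :
  (forall i, F i <= G i) -> \sum_i F i = \sum_i G i -> forall i, F i = G i.
Proof.
move=> leFG eqFG i; have [_] := leqif_sum (fun j (_ : true) => leqif_eq (leFG j)).
by rewrite eqFG eqxx => /esym/forall_inP/(_ i isT)/eqP.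
Qed.

Lemma eq_sum2_leq (I J : finType) (F G : I -> J -> nat) :
  (forall i j, F i j <= G i j) ->
  \sum_i \sum_j F i j = \sum_i \sum_j G i j -> forall i j, F i j = G i j.
Proof.
move=> leFG eqFG i; apply: eq_sum_leq (leFG i) _.
by apply: eq_sum_leq eqFG i => k; apply: leq_sum => j _.
Qed.

Lemma eq_sum3_leq (I J K : finType) (F G : I -> J -> K -> nat) :
  (forall i j k, F i j k <= G i j k) ->
  \sum_i \sum_j \sum_k F i j k = \sum_i \sum_j \sum_k G i j k ->
  forall i j k, F i j k = G i j k.
Proof.
move=> leFG eqFG i j; apply: eq_sum_leq (leFG i j) _.
by apply: eq_sum2_leq eqFG i j => k l; apply: leq_sum.
Qed.

Lemma cards3 (T : finType) (x y z : T) :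
  x != y -> y != z -> x != z -> #|[set x; y; z]| = 3.
Proof.
move=> xy yz xz; rewrite setUC cardsU1 cards2 xy !inE negb_or.
by rewrite eq_sym xz eq_sym yz.
Qed.

Lemma set3P (T : finType) (x y z u : T) :
  reflect [\/ u = x, u = y | u = z] (u \in [set x; y; z]).
Proof.
rewrite !inE -orbA; apply: (iffP or3P) => -[] /eqP;
  by [constructor 1 | constructor 2 | constructor 3].
Qed.

Lemma card_distinct_triples (T : finType) (A : {set T}) :
  \sum_x \sum_y \sum_z ([&& x \in A, y \in A, z \in A, x != y, y != z & x != z] : nat)
  = #|A| * #|A|.-1 * #|A|.-2.
Proof.
have pairs x y : \sum_z ([&& x \in A, y \in A, z \in A, x != y, y != z & x != z] : nat)
    = [&& x \in A, y \in A & x != y] * #|A|.-2.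
  case: (boolP [&& x \in A, y \in A & x != y]) => [/and3P [xA yA xy]|xy]; last first.
    rewrite big1 // => z _; move: xy.
    by case: (x \in A); case: (y \in A); case: (x == y); rewrite ?andbF.
  have -> : #|A|.-2 = #|A :\ x :\ y|.
    by rewrite (cardsD1 x A) (cardsD1 y (A :\ x)) xA !inE yA eq_sym xy.
  rewrite mul1n -sum_nat_mem; apply: eq_bigr => z _.
  by rewrite !inE xA yA xy [y == z]eq_sym [x == z]eq_sym /=; case: (z \in A); rewrite ?andbT ?andbF.
under eq_bigr do under eq_bigr do rewrite pairs.
have singles x : \sum_y ([&& x \in A, y \in A & x != y] * #|A|.-2) = (x \in A) * #|A|.-1 * #|A|.-2.
  rewrite -big_distrl /=; congr (_ * _).
  case: (boolP (x \in A)) => xA; last by rewrite big1 // => y _; rewrite (negbTE xA).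
  rewrite (cardsD1 x A) xA add1n mul1n -sum_nat_mem; apply: eq_bigr => y _.
  by rewrite !inE eq_sym /= andbC.
under eq_bigr do rewrite singles.
by rewrite -!big_distrl /= sum_nat_mem.
Qed.

Lemma bigmin_leq (I : finType) (P : pred I) (F : I -> nat) x i :
  P i -> \big[minn/x]_(j | P j) F j <= F i.
Proof.
move=> Pi; have : i \in index_enum I by rewrite mem_index_enum.
elim: (index_enum I) => // j r IHr; rewrite inE big_cons => /predU1P [<-|ir].
  by rewrite Pi geq_minl.
by case: (P j); [apply: leq_trans (geq_minr _ _) _ |]; exact: IHr.
Qed.

Lemma bigmin_attained (I : finType) (P : pred I) (F : I -> nat) x :
  \big[minn/x]_(j | P j) F j = x \/ exists2 i, P i & F i = \big[minn/x]_(j | P j) F j.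
Proof.
apply: (big_ind (fun v => v = x \/ exists2 i, P i & F i = v)); [by left | | by right; exists i].
by move=> u v Hu Hv; rewrite /minn; case: ltnP.
Qed.

Section CountingTriangles.
Variables (V : finType) (e : rel V).
Hypothesis e_sym : forall x y, e x y = e y x.

Definition nbhd (x : V) : {set V} := [set y | e x y].
Definition codeg (x y : V) : nat := #|nbhd x :&: nbhd y|.
Definition tri (x y z : V) : nat := e x y * e y z * e x z.
Definition ntri : nat := \sum_x \sum_y \sum_z tri x y z.
Definition nedge : nat := \sum_x \sum_y e x y.

Lemma deg_nbhd x : deg e x = #|nbhd x|.
Proof. by []. Qed.

Lemma codegE x y : codeg x y = \sum_z e x z * e y z.
Proof.
rewrite /codeg -sum_nat_mem; apply: eq_bigr => z _.
by rewrite !inE; case: (e x z) (e y z) => -[].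
Qed.

Lemma codegC x y : codeg x y = codeg y x.
Proof. by rewrite /codeg setIC. Qed.

Lemma nedge_deg : nedge = \sum_x deg e x.
Proof.
by apply: eq_bigr => x _; rewrite deg_nbhd -sum_nat_mem; apply: eq_bigr => y _; rewrite inE.
Qed.

Lemma sum_tri_weight (g : V -> V -> nat) :
  \sum_x \sum_y \sum_z tri x y z * g x y = \sum_x \sum_y e x y * codeg x y * g x y.
Proof.
apply: eq_bigr => x _; apply: eq_bigr => y _.
rewrite codegE big_distrr big_distrl /=; apply: eq_bigr => z _.
by rewrite /tri [e y z]e_sym; lia.
Qed.

Lemma ntri_codeg : ntri = \sum_x \sum_y e x y * codeg x y.
Proof.
have := sum_tri_weight (fun _ _ => 1).
under eq_bigr do under eq_bigr do under eq_bigr do rewrite muln1.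
by under [in RHS]eq_bigr do under eq_bigr do rewrite muln1.
Qed.

Lemma sum_tri_weight3 (g : V -> V -> nat) :
  \sum_x \sum_y \sum_z tri x y z * (g x y + g y z + g x z)
  = 3 * \sum_x \sum_y e x y * codeg x y * g x y.
Proof.
rewrite -sum_tri_weight.
have rotate : \sum_x \sum_y \sum_z tri x y z * g y z = \sum_x \sum_y \sum_z tri x y z * g x y.
  rewrite exchange_big; apply: eq_bigr => y _; rewrite exchange_big.
  apply: eq_bigr => z _; apply: eq_bigr => x _.
  by rewrite /tri [e x y]e_sym [e x z]e_sym; lia.
have swap : \sum_x \sum_y \sum_z tri x y z * g x z = \sum_x \sum_y \sum_z tri x y z * g x y.
  apply: eq_bigr => x _; rewrite exchange_big; apply: eq_bigr => z _; apply: eq_bigr => y _.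
  by rewrite /tri [e z y]e_sym; lia.
rewrite -[3]/(1 + 1 + 1) !mulnDl !mul1n -{2}rotate -{2}swap -!big_split /=.
apply: eq_bigr => x _; rewrite -!big_split /=; apply: eq_bigr => y _.
by rewrite -!big_split /=; apply: eq_bigr => z _; lia.
Qed.

Lemma codeg_lb x y : deg e x + deg e y <= codeg x y + #|V|.
Proof. by rewrite !deg_nbhd -cardsUI addnC leq_add2l max_card. Qed.

Lemma codeg3_lb x y z :
  deg e x + deg e y + deg e z + #|nbhd x :&: nbhd y :&: nbhd z|
  <= codeg x y + codeg y z + codeg x z + #|V|.
Proof.
rewrite !deg_nbhd /codeg.
set X := nbhd x; set Y := nbhd y; set Z := nbhd z.
have UZ := cardsUI Z (X :|: Y); have UXY := cardsUI X Y.
have UZXY := cardsUI (Z :&: X) (Z :&: Y).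
rewrite -setIUr setIACA setIid [Z :&: (X :&: Y)]setIC in UZXY.
have := max_card (Z :|: (X :|: Y)).
rewrite [X :&: Z]setIC [Y :&: Z]setIC [Z :&: X]setIC in UZXY *; lia.
Qed.

Hypothesis e_irr : forall x, ~~ e x x.

Lemma adj_neq x y : e x y -> x != y.
Proof. by apply: contraTneq => ->; apply: e_irr. Qed.

Lemma triangle_clique x y z : e x y -> e y z -> e x z -> is_clique e 3 [set x; y; z].
Proof.
move=> exy eyz exz; rewrite /is_clique cards3 ?adj_neq //=.
apply/forall_inP => u /set3P uxyz; apply/forall_inP => v /set3P vxyz.
by apply/implyP; case: uxyz vxyz => -> [] ->; rewrite ?eqxx // 1?e_sym.
Qed.

Lemma clique_adj (A : {set V}) r : is_clique e r A -> {in A &, forall u v, u != v -> e u v}.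
Proof. by case/andP => _ /forall_inP cl u v uA vA; move/forall_inP/(_ v vA)/implyP: (cl u uA). Qed.

Lemma clique3_triangle (A : {set V}) : is_clique e 3 A ->
  exists x y z, [/\ x \in A, y \in A, z \in A & [&& e x y, e y z & e x z]].
Proof.
move=> cA; have adjA := clique_adj cA; case/andP: cA => /eqP A3 _.
have /card_gt0P [x xA] : 0 < #|A| by rewrite A3.
have /card_gt0P [y] : 0 < #|A :\ x| by move: A3; rewrite (cardsD1 x A) xA; lia.
rewrite in_setD1 => /andP [yx yA].
have /card_gt0P [z] : 0 < #|A :\ x :\ y|.
  by move: A3; rewrite (cardsD1 x A) (cardsD1 y (A :\ x)) xA in_setD1 yx yA; lia.
rewrite !in_setD1 => /and3P [zy zx zA].
by exists x, y, z; rewrite !adjA // eq_sym.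
Qed.

Lemma clique3_tri (A : {set V}) x y z : is_clique e 3 A ->
  tri x y z * (A == [set x; y; z])
  = [&& x \in A, y \in A, z \in A, x != y, y != z & x != z].
Proof.
move=> cA; have adjA := clique_adj cA; case/andP: cA => /eqP A3 _.
case: (boolP [&& x \in A, y \in A, z \in A, x != y, y != z & x != z]).
  case/and4P=> xA yA zA /and3P [xy yz xz].
  have -> : A = [set x; y; z].
    apply/eqP; rewrite eq_sym eqEcard cards3 // A3 leqnn andbT.
    by apply/subsetP => u /set3P [] ->.
  by rewrite /tri !adjA ?eqxx.
move=> not_distinct; apply/eqP; rewrite muln_eq0; apply: contraNT not_distinct.
rewrite negb_or eqb0 negbK => /andP [tri_xyz /eqP ->].
move: tri_xyz; rewrite /tri !muln_eq0 !eqb0 !negb_or !negbK => /andP [/andP [exy eyz] exz].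
by rewrite !inE !eqxx !orbT !adj_neq.
Qed.

Lemma ntri_kr3 : ntri = 6 * kr e 3.
Proof.
have split_tri x y z :
    tri x y z = \sum_(A | is_clique e 3 A) tri x y z * (A == [set x; y; z]).
  case: (boolP [&& e x y, e y z & e x z]) => [/and3P [exy eyz exz]|].
    rewrite (bigD1 [set x; y; z]) ?triangle_clique //= eqxx muln1 big1 ?addn0 //.
    by move=> A /andP [_ /negbTE ->]; rewrite muln0.
  move=> not_triangle; have tri0 : tri x y z = 0.
    by move: not_triangle; rewrite /tri; case: (e x y); case: (e y z); case: (e x z).
  by rewrite tri0 big1 // => A _; rewrite mul0n.
rewrite /ntri; under eq_bigr do under eq_bigr do under eq_bigr do rewrite split_tri.
under eq_bigr do under eq_bigr do rewrite exchange_big.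
under eq_bigr do rewrite exchange_big.
rewrite exchange_big.
rewrite (eq_bigr (fun _ => 6)) => [|A cA]; last first.
  under eq_bigr do under eq_bigr do under eq_bigr do rewrite clique3_tri //.
  by case/andP: cA => /eqP A3 _; rewrite card_distinct_triples A3.
by rewrite sum_nat_cond_const mulnC /kr; congr (_ * #|_|); apply/setP => A; rewrite !inE.
Qed.

Lemma nedge_even : ~~ odd nedge.
Proof.
pose ord_adj x y := e x y && (enum_rank x < enum_rank y).
have -> : nedge = \sum_x \sum_y ord_adj x y + \sum_x \sum_y ord_adj y x.
  rewrite -big_split; apply: eq_bigr => x _; rewrite -big_split; apply: eq_bigr => y _.
  rewrite /ord_adj [e y x]e_sym; case exy: (e x y) => //=.
  have : enum_rank x != enum_rank y by apply: contra (adj_neq exy) => /eqP /enum_rank_inj ->.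
  by case: ltngtP => // /val_inj ->; rewrite eqxx.
by rewrite [in X in _ + X]exchange_big addnn odd_double.
Qed.

End CountingTriangles.

Lemma edge_weight_ineq (b s t : nat) :
  s <= b -> s <= t -> t * minn t b + s * b <= (s + b) * t.
Proof. by move=> sb st; case: (leqP t b) => tb; nia. Qed.

(* The graphs of G(n, beta) for p = 2 whose part V_0 is triangle-free:
   [I] plays the role of V_1 and [~: I] that of V_0. *)
Definition extremal_split (V : finType) (e : rel V) (I : {set V}) (b s : nat) : Prop :=
  [/\ #|I| = b, {in I &, forall u w, ~~ e u w}, {in I, forall u w, w \notin I -> e u w},
      {in ~: I, forall u, #|[set w in ~: I | e u w]| = s} &
      {in ~: I &, forall u v w, w \notin I -> ~~ [&& e u v, e v w & e u w]}].

Section TriangleBound.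
Variables (V : finType) (e : rel V) (b s : nat).
Hypothesis e_sym : forall x y, e x y = e y x.
Hypothesis s_gt0 : 0 < s.
Hypothesis s_le_b : s <= b.
Hypothesis card_V : #|V| = 2 * b + s.
Hypothesis deg_lb : forall x, b + s <= deg e x.

Lemma codeg_ge x y : s <= codeg e x y.
Proof. by have := codeg_lb e x y; have := deg_lb x; have := deg_lb y; rewrite card_V; lia. Qed.

Definition tcodeg x y := minn (codeg e x y) b.

Lemma tcodeg3_lb x y z : 2 * s + b <= tcodeg x y + tcodeg y z + tcodeg x z.
Proof.
have := codeg3_lb e x y z; have := deg_lb x; have := deg_lb y; have := deg_lb z.
have := codeg_ge x y; have := codeg_ge y z; have := codeg_ge x z.
by rewrite /tcodeg card_V; lia.
Qed.

Definition wsum := \sum_x \sum_y e x y * codeg e x y * tcodeg x y.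

Lemma ntri_wsum_lb : ntri e * (2 * s + b) <= 3 * wsum.
Proof.
rewrite /wsum -sum_tri_weight3 // /ntri big_distrl /=; apply: leq_sum => x _.
rewrite big_distrl /=; apply: leq_sum => y _; rewrite big_distrl /=; apply: leq_sum => z _.
by rewrite leq_mul2l tcodeg3_lb orbT.
Qed.

Lemma wsum_ub : wsum + s * b * nedge e <= (s + b) * ntri e.
Proof.
rewrite /wsum /nedge (ntri_codeg e_sym) !big_distrr -big_split /=; apply: leq_sum => x _.
rewrite !big_distrr -big_split /=; apply: leq_sum => y _.
by case: (e x y); rewrite ?mul0n ?muln0 ?mul1n ?muln1 // edge_weight_ineq ?codeg_ge.
Qed.

Lemma nedge_lb : #|V| * (b + s) <= nedge e.
Proof. by rewrite nedge_deg -sum_nat_const; apply: leq_sum => x _; apply: deg_lb. Qed.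

Lemma ntri_lb : 3 * s * b * (b + s) <= ntri e.
Proof.
have := ntri_wsum_lb; have := wsum_ub; have := nedge_lb; rewrite card_V => h1 h2 h3.
have : 3 * s * b * (2 * b + s) * (b + s) <= (2 * b + s) * ntri e by nia.
by rewrite -mulnA mulnCA leq_pmul2l //; lia.
Qed.

Section Equality.
Hypothesis ntri_eq : ntri e = 3 * s * b * (b + s).

Lemma nedge_eq : nedge e = #|V| * (b + s).
Proof.
have := ntri_wsum_lb; have := wsum_ub; have := nedge_lb; rewrite ntri_eq card_V => h1 h2 h3.
apply/eqP; rewrite eqn_leq h1 andbT -(@leq_pmul2l (3 * s * b)); first nia.
by rewrite !muln_gt0 s_gt0; lia.
Qed.

Lemma deg_eq x : deg e x = b + s.
Proof.
symmetry; apply: (eq_sum_leq (F := fun _ => b + s)) => [y|]; first exact: deg_lb.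
by rewrite -nedge_deg nedge_eq sum_nat_const cardT -cardE.
Qed.

Lemma wsum_eq : 3 * wsum = ntri e * (2 * s + b) /\ wsum + s * b * nedge e = (s + b) * ntri e.
Proof.
have := ntri_wsum_lb; have := wsum_ub; rewrite nedge_eq ntri_eq card_V => h1 h2.
split; nia.
Qed.

Lemma codeg_edge x y : e x y -> codeg e x y <= b /\ (codeg e x y = s \/ codeg e x y = b).
Proof.
move=> exy.
pose F x y := e x y * codeg e x y * tcodeg x y + s * b * e x y.
pose G x y := (s + b) * (e x y * codeg e x y).
have FG : F x y = G x y.
  apply: eq_sum2_leq => [u v|].
    rewrite /F /G; case: (e u v); rewrite ?mul0n ?muln0 ?mul1n ?muln1 //.
    by rewrite edge_weight_ineq ?codeg_ge.
  transitivity (wsum + s * b * nedge e).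
    rewrite /wsum /nedge big_distrr -big_split; apply: eq_bigr => u _.
    by rewrite big_distrr -big_split.
  rewrite (proj2 wsum_eq) (ntri_codeg e_sym) big_distrr; apply: eq_bigr => u _.
  by rewrite big_distrr.
move: FG; rewrite /F /G /tcodeg exy !mul1n muln1; have := codeg_ge x y.
by case: (leqP (codeg e x y) b) => cb; nia.
Qed.

Lemma triangle_common_nbhd x y z : e x y -> e y z -> e x z ->
  #|nbhd e x :&: nbhd e y :&: nbhd e z| = 0.
Proof.
move=> exy eyz exz.
pose F x y z := tri e x y z * (2 * s + b).
pose G x y z := tri e x y z * (tcodeg x y + tcodeg y z + tcodeg x z).
have FG : F x y z = G x y z.
  apply: eq_sum3_leq => [u v w|]; first by rewrite leq_mul2l tcodeg3_lb orbT.
  rewrite /G (sum_tri_weight3 e_sym) -/wsum (proj1 wsum_eq) /ntri big_distrl; apply: eq_bigr => u _.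
  by rewrite big_distrl; apply: eq_bigr => v _; rewrite big_distrl.
move: FG; rewrite /F /G /tri /tcodeg exy eyz exz !mul1n => FG.
have [[bxy _] [byz _] [bxz _]] := And3 (codeg_edge exy) (codeg_edge eyz) (codeg_edge exz).
by have := codeg3_lb e x y z; rewrite !deg_eq card_V; lia.
Qed.

Lemma heavy_edge : exists x y, e x y /\ codeg e x y = b.
Proof.
have [x [y exy]] : exists x y, e x y.
  case: (boolP [exists x, exists y, e x y]) => [/existsP [x /existsP [y exy]]|].
    by exists x, y.
  rewrite negb_exists => /forallP no_edge.
  have := nedge_eq; rewrite /nedge big1 => [|x _]; first by rewrite card_V; nia.
  by rewrite big1 // => y _; move: (no_edge x); rewrite negb_exists => /forallP/(_ y)/negbTE ->.
case: (boolP [exists x, exists y, e x y && (codeg e x y == b)]).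
  by case/existsP => u /existsP [v /andP [euv /eqP cuv]]; exists u, v.
rewrite negb_exists => /forallP light.
(* Otherwise every edge has codegree s, and counting triangles forces s = b. *)
have codeg_s u v : e u v -> codeg e u v = s.
  move=> euv; case: (codeg_edge euv) => _ [] // cuv.
  by move: (light u); rewrite negb_exists => /forallP/(_ v); rewrite euv cuv eqxx.
have : ntri e = s * nedge e.
  rewrite (ntri_codeg e_sym) /nedge big_distrr; apply: eq_bigr => u _.
  rewrite big_distrr; apply: eq_bigr => v _.
  by case euv: (e u v); rewrite /= ?mul0n ?muln0 ?mul1n ?muln1 // codeg_s.
rewrite nedge_eq ntri_eq card_V => sb.
have s_eq_b : s = b by nia.
by exists x, y; rewrite exy -s_eq_b codeg_s.
Qed.

Lemma extremal_split_exists : exists I, extremal_split e I b s.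
Proof.
have [x0 [y0 [e0 c0]]] := heavy_edge; pose I := nbhd e x0 :&: nbhd e y0.
have I_card : #|I| = b := c0.
have I_indep : {in I &, forall u w, ~~ e u w}.
  move=> u w; rewrite !inE => /andP [xu yu] /andP [xw yw]; apply/negP => euw.
  have /eqP := triangle_common_nbhd e0 yu xu; rewrite cards_eq0 => /eqP /setP /(_ w).
  by rewrite !inE xw yw euw.
have nbhd_I u : u \in I -> nbhd e u = ~: I.
  move=> uI; apply/eqP; rewrite eqEcard; apply/andP; split.
    apply/subsetP => w; rewrite [w \in nbhd e u]inE in_setC => euw.
    by apply: contraL euw => wI; apply: I_indep.
  by have := cardsC I; rewrite -deg_nbhd deg_eq card_V I_card; lia.
have I_cross : {in I, forall u w, w \notin I -> e u w}.
  by move=> u uI w wI; move/setP/(_ w): (nbhd_I u uI); rewrite [w \in nbhd e u]inE in_setC wI.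
exists I; split; [exact: I_card | exact: I_indep | exact: I_cross | |].
- move=> u; rewrite inE => uI; apply/eqP; rewrite -(eqn_add2l b) -(deg_eq u) deg_nbhd.
  rewrite -(cardsID I (nbhd e u)) -{1}I_card.
  have -> : nbhd e u :&: I = I.
    by apply/setIidPr/subsetP => w wI; rewrite inE e_sym I_cross.
  by apply/eqP; congr (_ + _); apply: eq_card => w; rewrite !inE andbC.
- move=> u v uI vI w wI; apply/negP => /and3P [euv evw euw].
  have /card_gt0P [z zI] : 0 < #|I| by rewrite I_card; lia.
  have /eqP := triangle_common_nbhd euv evw euw; rewrite cards_eq0 => /eqP /setP /(_ z).
  by rewrite !inE (e_sym u) (e_sym v) (e_sym w) !I_cross // -in_setC.
Qed.

End Equality.

Hypothesis e_irr : forall x, ~~ e x x.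

Lemma kr3_lb : b * (b + s) * s <= 2 * kr e 3.
Proof. by have := ntri_lb; rewrite ntri_kr3 //; lia. Qed.

Lemma kr3_eq_extremal_split :
  2 * kr e 3 = b * (b + s) * s -> exists I, extremal_split e I b s.
Proof. by move=> kr_eq; apply: extremal_split_exists; rewrite ntri_kr3 //; lia. Qed.

End TriangleBound.

Section ExtremalSplitCounting.
Variables (V : finType) (e : rel V) (I : {set V}) (b s : nat).
Hypothesis e_sym : forall x y, e x y = e y x.
Hypothesis split_e : extremal_split e I b s.

Lemma adj_split_in u w : u \in I -> e u w = (w \notin I).
Proof.
case: split_e => _ I_indep I_cross _ _ uI.
by case: (boolP (w \in I)) => wI; [apply/negbTE/I_indep | apply: I_cross].
Qed.

Lemma adj_split_out u w : u \notin I -> w \in I -> e u w.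
Proof. by move=> uI wI; rewrite e_sym adj_split_in. Qed.

Lemma nbhd_split_in u : u \in I -> nbhd e u = ~: I.
Proof. by move=> uI; apply/setP => w; rewrite !inE adj_split_in. Qed.

Lemma deg_split_in u : u \in I -> deg e u = #|~: I|.
Proof. by move=> uI; rewrite deg_nbhd nbhd_split_in. Qed.

Lemma deg_split_out u : u \notin I -> deg e u = b + s.
Proof.
case: split_e => I_card _ _ out_reg _ uI.
rewrite deg_nbhd -(cardsID I) -{}I_card -(out_reg u) ?inE //.
have -> : nbhd e u :&: I = I.
  by apply/setIidPr/subsetP => w wI; rewrite inE adj_split_out.
by congr (_ + _); apply: eq_card => w; rewrite !inE andbC.
Qed.

Lemma codeg_split_in_out u w : u \in I -> w \notin I -> codeg e u w = s.
Proof.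
case: split_e => _ _ _ out_reg _ uI wI.
rewrite /codeg nbhd_split_in // -(out_reg w) ?inE //.
by apply: eq_card => y; rewrite !inE andbC.
Qed.

Lemma codeg_split_out u w : u \notin I -> w \notin I -> e u w -> codeg e u w = b.
Proof.
case: split_e => I_card _ _ _ no_tri uI wI euw.
rewrite /codeg -I_card; apply: eq_card => y; rewrite !inE.
case: (boolP (y \in I)) => yI; first by rewrite !adj_split_out.
apply/negbTE/negP => /andP [euy ewy].
by move: (no_tri u w); rewrite !inE => /(_ uI wI y yI); rewrite euw euy ewy.
Qed.

Lemma ntri_split : ntri e = 3 * b * #|~: I| * s.
Proof.
have [I_card _ _ out_reg _] := split_e.
rewrite (ntri_codeg e_sym) (bigID (mem I)) /=.
rewrite (eq_bigr (fun _ => #|~: I| * s)) => [|u uI]; last first.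
  rewrite -sum_nat_mem big_distrl /=; apply: eq_bigr => w _.
  by rewrite adj_split_in // inE; case: (boolP (w \in I)) => wI //=; rewrite codeg_split_in_out.
rewrite [X in _ + X](eq_bigr (fun _ => 2 * b * s)) => [|u uI]; last first.
  rewrite (eq_bigr (fun w => (w \in I) * s + (w \in [set w in ~: I | e u w]) * b)) => [|w _].
    by rewrite big_split /= -!big_distrl /= !sum_nat_mem out_reg ?inE // I_card; lia.
  rewrite !inE; case: (boolP (w \in I)) => wI /=.
    by rewrite adj_split_out // codegC codeg_split_in_out //; lia.
  by case: (boolP (e u w)) => euw //=; rewrite codeg_split_out.
rewrite !sum_nat_cond_const cardsE I_card.
have -> : [set x | x \notin I] = ~: I by apply/setP => x; rewrite !inE.
lia.
Qed.

Lemma kr_in_split_out : kr_in e (~: I) 3 = 0.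
Proof.
have [_ _ _ _ no_tri] := split_e.
apply/eqP; rewrite cards_eq0; apply/eqP/setP => A; rewrite !inE.
apply/negbTE/negP => /andP [/subsetP A_out /clique3_triangle [x [y [z [xA yA zA]]]]].
by apply/negP/no_tri; rewrite ?A_out // -in_setC A_out.
Qed.

Hypothesis e_irr : forall x, ~~ e x x.

Lemma kr3_split : 2 * kr e 3 = b * #|~: I| * s.
Proof. by have := ntri_kr3 e_sym e_irr; rewrite ntri_split; lia. Qed.

End ExtremalSplitCounting.

Section JoinWithIndependentSet.
Variables (n m s : nat) (f : rel 'I_m).
Hypothesis f_sym : forall i j, f i j = f j i.
Hypothesis f_irr : forall i, ~~ f i i.
Hypothesis f_reg : regular f s.
Hypothesis f_tri_free : kr f 3 = 0.
Hypothesis m_le_n : m <= n.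

Definition restr_ord (x : 'I_n) : option 'I_m := insub (val x).

(* The vertices below m carry a copy of [f]; the others form an independent set
   joined to all of them. *)
Definition join_rel (x y : 'I_n) : bool :=
  match restr_ord x, restr_ord y with
  | Some i, Some j => f i j
  | Some _, None | None, Some _ => true
  | None, None => false
  end.

Definition join_graph : {set 'I_n * 'I_n} := [set p | join_rel p.1 p.2].
Definition join_indep : {set 'I_n} := [set x : 'I_n | m <= x].

Let emb : 'I_m -> 'I_n := widen_ord m_le_n.

Lemma emb_inj : injective emb.
Proof. by move=> i j /(congr1 val) eq_ij; apply: val_inj. Qed.

Lemma restr_ordP (x : 'I_n) :
  (x \notin join_indep /\ exists2 i, x = emb i & restr_ord x = Some i)
  \/ (x \in join_indep /\ restr_ord x = None).
Proof.
rewrite /restr_ord inE -ltnNge; case: insubP => [i xm xi | xm]; [left | right].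
  by split=> //; exists i => //; apply: val_inj.
by rewrite leqNgt.
Qed.

Lemma restr_ord_emb i : restr_ord (emb i) = Some i.
Proof. exact: valK. Qed.

Lemma emb_notin_indep i : emb i \notin join_indep.
Proof. by rewrite inE -ltnNge /= ltn_ord. Qed.

Lemma join_graphE x y : rel_of join_graph x y = join_rel x y.
Proof. by rewrite /rel_of inE. Qed.

Lemma join_rel_emb i j : join_rel (emb i) (emb j) = f i j.
Proof. by rewrite /join_rel !restr_ord_emb. Qed.

Lemma join_rel_indep x y : x \in join_indep -> join_rel x y = (y \notin join_indep).
Proof.
case: (restr_ordP x) => [[/negP//]|[_ rx] _]; rewrite /join_rel rx.
by case: (restr_ordP y) => [[-> [j _ ->]] | [-> ->]].
Qed.

Lemma join_rel_sym x y : join_rel x y = join_rel y x.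
Proof.
case: (restr_ordP x) => [[_ [i -> _]] | [xI rx]]; last first.
  by rewrite join_rel_indep // /join_rel rx; case: (restr_ordP y) => [[-> [j _ ->]] | [-> ->]].
case: (restr_ordP y) => [[_ [j -> _]] | [yI ry]]; first by rewrite !join_rel_emb f_sym.
by rewrite [RHS]join_rel_indep // emb_notin_indep /join_rel restr_ord_emb ry.
Qed.

Lemma join_rel_irr x : ~~ join_rel x x.
Proof.
case: (restr_ordP x) => [[_ [i -> _]] | [xI _]]; first by rewrite join_rel_emb.
by rewrite join_rel_indep // xI.
Qed.

Lemma join_graph_simple : simpleb join_graph.
Proof.
apply/andP; split; apply/forallP => x; last by rewrite inE join_rel_irr.
by apply/forallP => y; rewrite !inE join_rel_sym.
Qed.

Lemma card_join_indepC : #|~: join_indep| = m.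
Proof.
have -> : ~: join_indep = emb @: setT.
  apply/setP => x; apply/idP/imsetP => [|[i _ ->]].
    case: (restr_ordP x) => [[_ [i -> _]] _ | [xI _]]; first by exists i.
    by rewrite inE xI.
  by rewrite in_setC emb_notin_indep.
by rewrite card_imset ?cardsT ?card_ord //; apply: emb_inj.
Qed.

Lemma join_graph_split : extremal_split (rel_of join_graph) join_indep (n - m) s.
Proof.
split.
- by have := cardsC join_indep; rewrite card_join_indepC card_ord; move: #|_| => k; lia.
- by move=> u w uI wI; rewrite join_graphE join_rel_indep // wI.
- by move=> u uI w wI; rewrite join_graphE join_rel_indep.
- move=> u; case: (restr_ordP u) => [[_ [i -> _]] _ | [uI _]]; last by rewrite in_setC uI.
  rewrite -(f_reg i) /deg -(card_imset _ emb_inj); apply: eq_card => y.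
  rewrite !inE join_graphE; apply/andP/imsetP => [[yC]|[j]].
    case: (restr_ordP y) => [[_ [j -> _]] | [yI _]]; last by rewrite inE in yI; rewrite yI in yC.
    by move=> fij; exists j => //; rewrite inE -join_rel_emb.
  by rewrite inE => fij ->; rewrite join_rel_emb fij; have := emb_notin_indep j; rewrite inE.
- move=> u v; case: (restr_ordP u) => [[_ [i -> _]] _ | [uI _]]; last by rewrite in_setC uI.
  case: (restr_ordP v) => [[_ [j -> _]] _ | [vI _]]; last by rewrite in_setC vI.
  move=> w; case: (restr_ordP w) => [[_ [k -> _]] _ | [->]] //.
  rewrite !join_graphE !join_rel_emb; apply/negP => /and3P [fij fjk fik].
  move/eqP: f_tri_free; rewrite cards_eq0 => /eqP /setP /(_ [set i; j; k]).
  by rewrite !inE triangle_clique.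
Qed.

Hypothesis n_gt0 : 0 < n.
Hypothesis m_eq : n - m + s = m.

Lemma deg_join_graph x : deg (rel_of join_graph) x = m.
Proof.
have split_j := join_graph_split.
have E_sym u v : rel_of join_graph u v = rel_of join_graph v u.
  by rewrite !join_graphE join_rel_sym.
case: (boolP (x \in join_indep)) => xI.
  by rewrite (deg_split_in split_j xI) card_join_indepC.
by rewrite (deg_split_out E_sym split_j xI).
Qed.

Lemma join_graph_mindeg : mindegb join_graph m.
Proof.
apply/andP; split; last by apply/forallP => x; rewrite deg_join_graph.
by apply/existsP; exists (Ordinal n_gt0); rewrite deg_join_graph.
Qed.

Lemma kr3_join_graph : 2 * kr (rel_of join_graph) 3 = (n - m) * m * s.
Proof.
rewrite (kr3_split _ join_graph_split) ?card_join_indepC // => [u v|u].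
  by rewrite !join_graphE join_rel_sym.
by rewrite join_graphE join_rel_irr.
Qed.

End JoinWithIndependentSet.

Section OutsideGraph.
Variables (V : finType) (e : rel V) (I : {set V}) (b s m : nat).
Hypothesis e_sym : forall x y, e x y = e y x.
Hypothesis e_irr : forall x, ~~ e x x.
Hypothesis split_e : extremal_split e I b s.
Hypothesis card_out : #|~: I| = m.

Definition out_vertex (i : 'I_m) : V := enum_val (cast_ord (esym card_out) i).
Definition out_graph : rel 'I_m := fun i j => e (out_vertex i) (out_vertex j).

Lemma out_vertex_notin i : out_vertex i \notin I.
Proof. by have := enum_valP (cast_ord (esym card_out) i); rewrite inE. Qed.

Lemma out_vertex_inj : injective out_vertex.
Proof. by move=> i j /enum_val_inj /cast_ord_inj. Qed.

Lemma out_vertex_onto y : y \notin I -> exists i, out_vertex i = y.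
Proof.
rewrite -in_setC => yI; exists (cast_ord card_out (enum_rank_in yI y)).
by rewrite /out_vertex cast_ordK enum_rankK_in.
Qed.

Lemma out_graph_simple : simple_graph out_graph.
Proof. by split=> [i j|i]; rewrite /out_graph. Qed.

Lemma out_graph_regular : regular out_graph s.
Proof.
move=> i; case: split_e => _ _ _ out_reg _.
rewrite -(out_reg (out_vertex i)) ?in_setC ?out_vertex_notin // /deg -(card_imset _ out_vertex_inj).
apply: eq_card => y; rewrite !inE; apply/imsetP/andP => [[j]|[yI eiy]].
  by rewrite inE /out_graph => fij ->; rewrite out_vertex_notin.
by have [j ej] := out_vertex_onto yI; exists j; rewrite // inE /out_graph ej.
Qed.

Lemma out_graph_triangle_free : kr out_graph 3 = 0.
Proof.
case: split_e => _ _ _ _ no_tri.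
apply/eqP; rewrite cards_eq0; apply/eqP/setP => A; rewrite !inE.
apply/negbTE/negP => /clique3_triangle [x [y [z [_ _ _]]]]; apply/negP.
by apply: no_tri; rewrite ?inE out_vertex_notin.
Qed.

End OutsideGraph.

Section ExtremalParameters.
Variables (n b s : nat).
Hypothesis s_gt0 : 0 < s.
Hypothesis s_le_b : s <= b.
Hypothesis n_eq : n = 2 * b + s.

Lemma pp_extremal : pp n b = 2.
Proof.
rewrite /pp n_eq (_ : 2 * b + s + b - 1 = 3 * b + (s - 1)); last by lia.
by rewrite divnMDl ?divn_small //; lia.
Qed.

Lemma in_family_of_split (V : finType) (e : rel V) (I : {set V}) :
  (forall x y, e x y = e y x) -> #|V| = n -> extremal_split e I b s -> in_family n b e.
Proof.
move=> e_sym card_V split_e; rewrite /in_family pp_extremal.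
pose part x : 'I_2 := if x \in I then ord_max else ord0.
have part0 : [set x | val (part x) == 0] = ~: I.
  by apply/setP => x; rewrite !inE /part; case: (x \in I).
exists part; rewrite /= part0.
have [I_card I_indep I_cross out_reg _] := split_e.
split.
- by have := cardsC I; rewrite card_V I_card n_eq; lia.
- move=> i /andP [i_gt0 i_lt2]; rewrite (_ : i = 1); last by lia.
  by rewrite -I_card; apply: eq_card => x; rewrite !inE /part; case: (x \in I).
- move=> x y; rewrite /part; case: (boolP (x \in I)) => xI; case: (boolP (y \in I)) => yI //= _.
    exact: I_cross.
  by rewrite e_sym; apply: I_cross.
- move=> x y; rewrite /part; case: (boolP (x \in I)) => xI; case: (boolP (y \in I)) => yI //= _ _.
  exact: I_indep.
- split=> [x xI|f _ _]; last by rewrite (kr_in_split_out split_e).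
  by rewrite out_reg // n_eq; lia.
Qed.

Lemma split_of_in_family (V : finType) (e : rel V) :
  (forall x y, e x y = e y x) -> (forall x, ~~ e x x) ->
  feasible n b -> in_family n b e -> exists I, extremal_split e I b s.
Proof.
move=> e_sym e_irr; rewrite /feasible /in_family pp_extremal.
move=> [_ [f [f_simple f_reg f_tri_free]]] [part]; cbv zeta.
move=> [_ card1 cross indep [out_reg out_min]].
have no_tri0 := out_min f f_simple f_reg; rewrite f_tri_free leqn0 in no_tri0.
pose I := [set x | val (part x) == 1].
have part01 x : (val (part x) == 0) = (x \notin I).
  by rewrite inE; case: (part x) => -[|[|k]].
exists I; split.
- exact: card1.
- move=> u w; rewrite !inE => /eqP pu /eqP pw; apply: indep; last by rewrite pu.
  by apply: val_inj; rewrite pu pw.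
- move=> u; rewrite inE => /eqP pu w wI; apply: cross; apply: contra wI => /eqP puw.
  by rewrite inE -puw pu.
- move=> u; rewrite inE -part01 => u0; have -> : s = n - 2 * b by lia.
  by rewrite -(out_reg u) ?inE //; apply: eq_card => y; rewrite !inE; case: (part y) => -[|[|k]].
- move=> u v; rewrite !in_setC => u0 v0 w w0; apply/negP => /and3P [euv evw euw].
  move: no_tri0; rewrite /kr_in cards_eq0 => /eqP /setP /(_ [set u; v; w]); rewrite !inE.
  rewrite triangle_clique // andbT => /negbT/negP; apply.
  by apply/subsetP => y /set3P [] ->; rewrite inE part01.
Qed.

Lemma feasible_of_split (V : finType) (e : rel V) (I : {set V}) :
  (forall x y, e x y = e y x) -> (forall x, ~~ e x x) -> #|V| = n ->
  extremal_split e I b s -> feasible n b.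
Proof.
move=> e_sym e_irr card_V split_e; have [I_card _ _ _ _] := split_e.
have card_out : #|~: I| = n - (2 - 1) * b by have := cardsC I; rewrite card_V I_card; lia.
rewrite /feasible pp_extremal; split.
  have deg_n x : deg e x = b + s.
    case: (boolP (x \in I)) => xI; last exact: (deg_split_out e_sym split_e xI).
    by rewrite (deg_split_in split_e xI) card_out n_eq; lia.
  have := nedge_even e_sym e_irr; rewrite nedge_deg (eq_bigr _ (fun x _ => deg_n x)).
  by rewrite sum_nat_const cardE -cardT card_V n_eq (_ : 2 * b + s - b = b + s) ?oddM; lia.
exists (out_graph e card_out); split.
- exact: out_graph_simple.
- by rewrite (_ : n - 2 * b = s); [apply: (out_graph_regular split_e) | lia].
- exact: (out_graph_triangle_free split_e).
Qed.

End ExtremalParameters.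

Lemma simplebP n (E : {set 'I_n * 'I_n}) : simpleb E ->
  (forall x y, rel_of E x y = rel_of E y x) /\ (forall x, ~~ rel_of E x x).
Proof.
case/andP => /forallP E_sym /forallP E_irr; split=> [x y|//].
by apply/eqP/(forallP (E_sym x)).
Qed.

Lemma mindegb_lb n (E : {set 'I_n * 'I_n}) d : mindegb E d -> forall x, d <= deg (rel_of E) x.
Proof. by case/andP => _ /forallP. Qed.

Section MinimumTriangles.
Variables (n b s : nat).
Hypothesis s_gt0 : 0 < s.
Hypothesis s_le_b : s <= b.
Hypothesis n_eq : n = 2 * b + s.

Lemma kr_min_lb : b * (b + s) * s <= 2 * kr_min 3 n (b + s).
Proof.
apply: (big_ind (fun k => b * (b + s) * s <= 2 * k)) => [|k1 k2 h1 h2|E /andP [E_simple E_deg]].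
- by rewrite n_eq; nia.
- by rewrite /minn; case: ltnP.
have [E_sym E_irr] := simplebP E_simple.
by apply: kr3_lb => //; [rewrite card_ord | apply: mindegb_lb].
Qed.

Lemma feasible_of_kr_min_eq : 2 * kr_min 3 n (b + s) = b * (b + s) * s -> feasible n b.
Proof.
rewrite /kr_min.
have [->|[E]] := bigmin_attained (fun E : {set 'I_n * 'I_n} => simpleb E && mindegb E (b + s))
  (fun E => kr (rel_of E) 3) (n ^ 3); first by rewrite n_eq; nia.
case/andP => /simplebP [E_sym E_irr] /mindegb_lb E_deg <- kr_eq.
have card_n : #|'I_n| = 2 * b + s by rewrite card_ord.
have [I split_E] := kr3_eq_extremal_split E_sym s_gt0 s_le_b card_n E_deg E_irr kr_eq.
exact: (feasible_of_split s_gt0 s_le_b n_eq E_sym E_irr (card_ord n) split_E).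
Qed.

Lemma kr_min_eq_of_feasible : feasible n b -> 2 * kr_min 3 n (b + s) = b * (b + s) * s.
Proof.
rewrite /feasible (pp_extremal s_gt0 s_le_b n_eq) => -[_ [f [[f_sym f_irr] f_reg f_tri_free]]].
have m_le_n : n - (2 - 1) * b <= n by lia.
have f_reg' : regular f s by rewrite (_ : s = n - 2 * b) //; lia.
have E_simple := join_graph_simple f_sym f_irr m_le_n.
have m_eq : n - (2 - 1) * b = b + s by lia.
have E_deg : mindegb (join_graph n f) (b + s).
  by rewrite -m_eq; apply: (join_graph_mindeg f_sym f_irr f_reg' f_tri_free m_le_n); lia.
have E_kr := kr3_join_graph f_sym f_irr f_reg' f_tri_free m_le_n.
have kr_min_le : kr_min 3 n (b + s) <= kr (rel_of (join_graph n f)) 3.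
  by apply: (bigmin_leq (P := fun E => simpleb E && mindegb E (b + s))); rewrite E_simple E_deg.
have E_val : (n - (n - (2 - 1) * b)) * (n - (2 - 1) * b) * s = b * (b + s) * s.
  have b_eq : n - (b + s) = b by lia.
  by rewrite m_eq b_eq.
apply/eqP; rewrite eqn_leq kr_min_lb andbT -E_val -E_kr.
by rewrite leq_mul2l kr_min_le orbT.
Qed.

End MinimumTriangles.

Import Order.TTheory GRing.Theory Num.Theory.
Local Open Scope ring_scope.

Lemma gr3_pp2 n b : pp n b = 2%N ->
  gr_n 3 n b = 1 / 2%:R * (n%:R - 2%:R * b%:R) * (n%:R - b%:R) * b%:R.
Proof.
move=> pp2; rewrite /gr_n pp2 /= (_ : 'C(2 - 1, 3) = 0%N) // (_ : 'C(2 - 1, 3 - 1) = 0%N) //.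
rewrite (_ : 'C(2 - 1, 3 - (0 + 1).+1) = 1%N) // !mul0r !add0r.
by rewrite (_ : 2%:R - 1 = 1 :> rat) ?mul1r ?expr1 // -addn1 natrD addrK.
Qed.

Lemma gr3_extremal (n b s : nat) : (0 < s)%N -> (s <= b)%N -> n = (2 * b + s)%N ->
  gr_n 3 n b = (b * (b + s) * s)%:R / 2%:R.
Proof.
move=> s_gt0 s_le_b n_eq; rewrite gr3_pp2 ?(pp_extremal s_gt0 s_le_b n_eq) //.
have -> : n%:R - 2%:R * b%:R = s%:R :> rat by rewrite -natrM -natrB; [congr _%:R |]; lia.
have -> : n%:R - b%:R = (b + s)%:R :> rat by rewrite -natrB; [congr _%:R |]; lia.
by rewrite !natrM; ring.
Qed.

Lemma natr_eq_half (a c : nat) : (a%:R = c%:R / 2%:R :> rat) <-> (2 * a = c)%N.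
Proof.
have two_neq0 : 2%:R != 0 :> rat by rewrite pnatr_eq0.
split => [a_half | <-]; last by rewrite natrM mulrAC divff ?mul1r.
by apply/eqP; rewrite -(eqr_nat rat) natrM a_half mulrC divfK.
Qed.

Lemma natr_half_le (a c : nat) : (c%:R / 2%:R <= a%:R :> rat) = (c <= 2 * a)%N.
Proof. by rewrite ler_pdivrMr ?ltr0n // -natrM ler_nat mulnC. Qed.

Theorem mainTheorem1 (n d : nat) :
  (0 < n)%N -> (0 < d)%N -> (n < 2 * d)%N -> (3 * d <= 2 * n)%N ->
  let b := (n - d)%N in
  [/\ gr_n 3 n b <= (kr_min 3 n d)%:R,
      gr_n 3 n b = (1 / 2%:R) * (n%:R - 2%:R * b%:R) * (n%:R - b%:R) * b%:R,
      (kr_min 3 n d)%:R = gr_n 3 n b <-> feasible n b &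
      feasible n b ->
        forall (V : finType) (e : rel V), #|V| = n -> simple_graph e -> has_mindeg e d ->
          ((kr e 3)%:R = gr_n 3 n b <-> in_family n b e)].
Proof.
move=> n_gt0 d_gt0 n_lt d_le b; pose s := (d - b)%N.
have [s_gt0 s_le_b n_eq d_eq] : [/\ 0 < s, s <= b, n = 2 * b + s & d = b + s]%N.
  by rewrite /s /b; split; lia.
have gr_val := gr3_extremal s_gt0 s_le_b n_eq.
rewrite gr_val d_eq; split.
- by rewrite natr_half_le kr_min_lb.
- by rewrite -gr_val gr3_pp2 ?(pp_extremal s_gt0 s_le_b n_eq).
- rewrite natr_eq_half.
  by split; [apply: feasible_of_kr_min_eq | apply: kr_min_eq_of_feasible].
move=> feas V e card_V [e_sym e_irr] [_ deg_lb]; rewrite natr_eq_half.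
have card_V' : #|V| = (2 * b + s)%N by rewrite card_V.
split=> [kr_eq | /(split_of_in_family s_gt0 s_le_b n_eq e_sym e_irr feas) [I split_e]].
  have [I split_e] := kr3_eq_extremal_split e_sym s_gt0 s_le_b card_V' deg_lb e_irr kr_eq.
  exact: (in_family_of_split s_gt0 s_le_b n_eq e_sym card_V split_e).
have [I_card _ _ _ _] := split_e.
have card_out : #|~: I| = (b + s)%N by have := cardsC I; rewrite card_V' I_card; lia.
by rewrite (kr3_split e_sym split_e e_irr) card_out.
Qed.
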